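(* Let $\alpha \ge 1$ and let $\mathcal{F}$ be a $k$-uniform hypergraph on $[n]$. Let $\mathcal{P}_{\mathcal{F}}$ be the partition of $[n]$ into the equivalence classes of the relation in which $i \sim j$ if and only if $i=j$ or the transposition $(ij)$ is an automorphism of $\mathcal{F}$. Then there is $\vec{w}\in\mathbb{R}^n$ with $\|\vec{w}\|_\alpha = 1$ and $w_t \ge 0$ for all $1\le t\le n$ such that $\tau_{\mathcal{F}}(\vec{w},\dots,\vec{w}) = \lambda_\alpha(\mathcal{F})$ and $\vec{w}$ is constant on each part of $\mathcal{P}_{\mathcal{F}}$.
   Context: For a $k$-uniform hypergraph $\mathcal{F}$ on $[n]$ and $x\in\mathbb{R}^n$, $\tau_{\mathcal{F}}(x,\dots,x) = k!\sum_{\{i_1,\dots,i_k\}\in E(\mathcal{F})}x_{i_1}\cdots x_{i_k}$, and $\lambda_\alpha(\mathcal{F}) = \max\{\tau_{\mathcal{F}}(x,\dots,x) : \|x\|_\alpha = 1\}$ where $\|x\|_\alpha = (\sum_i|x_i|^\alpha)^{1/\alpha}$. *)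

From HB Require Import structures.
From mathcomp Require Import all_boot all_order all_algebra all_fingroup.
From mathcomp Require Import all_classical all_reals all_analysis.
Set Implicit Arguments. Unset Strict Implicit. Unset Printing Implicit Defensive.
Import Order.TTheory GRing.Theory Num.Theory.
Local Open Scope ring_scope.
Local Open Scope classical_set_scope.

Definition uniform (n k : nat) (E : {set {set 'I_n}}) : Prop :=
  forall e, e \in E -> #|e| = k.

Definition tau {R : realType} (n k : nat) (E : {set {set 'I_n}}) (x : 'I_n -> R) : R :=
  (k`!)%:R * \sum_(e in E) \prod_(i in e) x i.

Definition anorm {R : realType} (n : nat) (alpha : R) (x : 'I_n -> R) : R :=
  (\sum_(i < n) `|x i| `^ alpha) `^ (alpha^-1).

Definition lambda {R : realType} (n k : nat) (alpha : R) (E : {set {set 'I_n}}) : R :=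
  sup [set tau k E x | x in [set x : 'I_n -> R | anorm alpha x = 1]].

Definition is_aut (n : nat) (E : {set {set 'I_n}}) (s : {perm 'I_n}) : Prop :=
  forall e : {set 'I_n}, (e \in E) = ((s @: e) \in E).

Definition transp_equiv (n : nat) (E : {set {set 'I_n}}) (i j : 'I_n) : Prop :=
  i = j \/ is_aut E (tperm i j).
Arguments transp_equiv {n} E i j.
Arguments is_aut {n} E s.
Arguments uniform {n} k E.
Arguments tau {R n} k E x.
Arguments anorm {R n} alpha x.
Arguments lambda {R n} k alpha E.

From HB Require Import structures.
From mathcomp Require Import all_boot all_order all_algebra all_fingroup.
From mathcomp Require Import all_classical all_reals all_analysis.
From mathcomp Require Import ring lra.

(* Maximize [tau] over the compact set of nonnegative vectors of unit
   alpha-norm (nonnegativity is free since [tau x <= tau |x|]) and, among the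
   maximizers, minimize the energy [sum_t (x_t^alpha)^2].  Let [w] be such a
   vector, [(i j)] an automorphism and [w_i <> w_j].  Replacing [w_i] and [w_j]
   by their power mean [m], [m^alpha = (w_i^alpha + w_j^alpha) / 2], keeps the
   alpha-norm and strictly lowers the energy.  It does not lower [tau]: since
   [(i j)] is an automorphism, [tau w] is the average of [tau w] and
   [tau (w o (i j))], and edge by edge this average is bounded using
   [w_i + w_j <= 2 m] (convexity of [y^alpha]) and [w_i w_j <= m^2].  This
   contradicts the choice of [w]. *)

Set Implicit Arguments. Unset Strict Implicit. Unset Printing Implicit Defensive.
Import Order.TTheory GRing.Theory Num.Theory numFieldNormedType.Exports.
(* Vectors ['I_n -> R] carry the product topology. *)
Import ArrowAsProduct.
Local Open Scope ring_scope.
Local Open Scope classical_set_scope.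

Lemma compact_argmax_argmin (T : topologicalType) (R : realType)
    (K : set T) (f g : T -> R) :
  compact K -> K !=set0 -> continuous f -> continuous g ->
  exists c, [/\ K c, forall x, K x -> f x <= f c
            & forall x, K x -> f x = f c -> g c <= g x].
Proof.
move=> Kc K0 fc gc.
have [c /set_mem Kc' cmax] := compact_EVT_max K0 Kc (continuous_subspaceT fc).
pose M := K `&` f @^-1` [set f c].
have Mc : compact M.
  apply: compact_closedI => //.
  by apply: preimage_closed => [x _|]; [exact: fc|exact: closed_eq].
have [d /set_mem [Kd fdc] dmin] :=
  compact_EVT_min (ex_intro M c (conj Kc' erefl)) Mc (continuous_subspaceT gc).
exists d; split=> // [x Kx|x Kx fx].
  by rewrite fdc; apply: cmax; rewrite inE.
by apply: dmin; rewrite inE; split; rewrite //= fx fdc.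
Qed.

Lemma powR_midpoint_le (R : realType) (p a b : R) : 1 <= p -> 0 <= a -> 0 <= b ->
  ((a + b) / 2) `^ p <= (a `^ p + b `^ p) / 2.
Proof.
move=> p1 a0 b0.
have half0 : (0 : R) <= 2^-1 by rewrite invr_ge0.
have half1 : (2^-1 : R) <= 1 by rewrite invf_le1 // ler1n.
have := @convex_powR R p p1 (Itv01 half0 half1) a b.
rewrite !inE /= !in_itv /= !andbT => /(_ a0 b0).
rewrite !convRE /= /conv /= /unstable.onem /GRing.scale /=.
have -> : 1 - 2^-1 = 2^-1 :> R by field.
by rewrite -!mulrDr ![_ / 2]mulrC.
Qed.

Lemma continuous_normr_powR (R : realType) (p : R) : 0 < p ->
  continuous (fun x : R => `|x| `^ p).
Proof.
move=> p0 x; have [->|x0] := eqVneq x 0.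
  apply/cvgrPdist_lt => e e0; exists (e `^ p^-1) => /=; first by rewrite powR_gt0.
  move=> y; rewrite /ball /= sub0r normrN normr0 powR0 ?gt_eqF// sub0r normrN => ye.
  rewrite ger0_norm ?powR_ge0//.
  have -> : e = (e `^ p^-1) `^ p by rewrite -powRrM mulVf ?gt_eqF// powRr1 // ltW.
  by apply: gt0_ltr_powR => //; rewrite nnegrE ?powR_ge0.
apply: (@continuous_comp _ _ _ (fun y : R => `|y|) (fun y : R => y `^ p)).
  exact: norm_continuous.
apply: differentiable_continuous; rewrite -derivable1_diffP.
by apply: derivable_powR; rewrite in_itv /= andbT normr_gt0.
Qed.

Lemma mulr_le_sqr (R : realDomainType) (a b m : R) :
  0 <= a -> 0 <= b -> a + b <= 2 * m -> a * b <= m * m.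
Proof.
move=> a0 b0 abm.
have := sqr_ge0 (a - b); have : 0 <= 2 * m - (a + b) by rewrite subr_ge0.
nra.
Qed.

Definition merge (T : eqType) (V : Type) (x : T -> V) (i j : T) (m : V) : T -> V :=
  fun t => if (t == i) || (t == j) then m else x t.

Lemma sumr_split2 (T : finType) (V : nmodType) (F : T -> V) i j : i != j ->
  \sum_t F t = F i + F j + \sum_(t | (t != i) && (t != j)) F t.
Proof. by move=> ij; rewrite (bigD1 i) //= (bigD1 j) 1?eq_sym //= addrA. Qed.

Lemma sumr_mergeB (T : finType) (U : Type) (V : zmodType) (F : U -> V)
    (x : T -> U) i j m : i != j ->
  \sum_t F (merge x i j m t) - \sum_t F (x t) = F m *+ 2 - (F (x i) + F (x j)).
Proof.
move=> ij; rewrite !(sumr_split2 _ ij) /merge !eqxx orbT /=.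
have -> : \sum_(t | (t != i) && (t != j)) F (if (t == i) || (t == j) then m else x t)
        = \sum_(t | (t != i) && (t != j)) F (x t).
  by apply: eq_bigr => t /andP[/negbTE -> /negbTE ->].
by rewrite mulr2n opprD addrACA subrr addr0.
Qed.

Lemma prodr_split2 (T : finType) (V : comPzSemiRingType) (e : {set T})
    (x : T -> V) i j : i != j ->
  \prod_(t in e) x t = (if i \in e then x i else 1) * (if j \in e then x j else 1)
    * \prod_(t in e | (t != i) && (t != j)) x t.
Proof.
move=> ij; rewrite (bigID (pred1 i)) /= [X in _ * X](bigID (pred1 j)) /= mulrA.
have single (l : T) (P : pred T) : P l ->
    \prod_(t in e | P t && (t == l)) x t = if l \in e then x l else 1.
  move=> Pl; case: ifP => le.
    by rewrite (big_pred1 l) // => t /=; case: eqP => [->|]; rewrite ?le ?Pl ?andbF.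
  by rewrite big_pred0 // => t /=; case: eqP => [->|]; rewrite ?le ?andbF.
rewrite (single i predT) // (eq_bigl (fun t => (t \in e) && ((t != i) && (t == j)))).
  by rewrite (single j (fun t => t != i)) 1?eq_sym // (eq_bigl _ _ (fun t => andbA _ _ _)).
by move=> t; rewrite andbA.
Qed.

Section power_sum.
Variables (R : realType) (alpha : R) (n : nat).
Hypothesis alpha_gt0 : 0 < alpha.

Definition powsum (x : 'I_n -> R) := \sum_(t < n) `|x t| `^ alpha.

Definition energy (x : 'I_n -> R) := \sum_(t < n) (`|x t| `^ alpha) ^+ 2.

Definition nonneg_sphere := [set x : 'I_n -> R | powsum x = 1 /\ forall t, 0 <= x t].

Lemma anorm_eq1 x : anorm alpha x = 1 <-> powsum x = 1.
Proof.
have s0 : 0 <= powsum x by apply: sumr_ge0 => t _; exact: powR_ge0.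
rewrite /anorm -/(powsum x); split=> [h|->]; last by rewrite powR1.
have inv_alpha : alpha^-1 * alpha = 1 by rewrite mulVf ?lt0r_neq0.
by rewrite -[LHS](powRr1 s0) -[in LHS]inv_alpha powRrM h powR1.
Qed.

Let continuous_coord_powR t : continuous (fun x : 'I_n -> R => `|x t| `^ alpha).
Proof.
move=> x; apply: (@continuous_comp _ _ _ (fun x : 'I_n -> R => x t)
  (fun y : R => `|y| `^ alpha)); first exact: proj_continuous.
exact: continuous_normr_powR.
Qed.

Lemma continuous_powsum : continuous powsum.
Proof.
apply: continuous_big => [|t _]; first exact: add_continuous.
exact: continuous_coord_powR.
Qed.

Lemma continuous_energy : continuous energy.
Proof.
apply: continuous_big => [|t _ x]; first exact: add_continuous.
exact: continuous_comp (@continuous_coord_powR t x) (@exprn_continuous R 2 _).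
Qed.

Lemma closed_nonneg_sphere : closed nonneg_sphere.
Proof.
have -> : nonneg_sphere
    = powsum @^-1` [set 1] `&` \bigcap_(t in setT) [set x | 0 <= x t].
  by apply/seteqP; split=> x /= [sx x0]; split=> // t *; apply: x0.
apply: closedI.
  by apply: preimage_closed => [x _|]; [exact: continuous_powsum|exact: closed_eq].
(* [closed_ge] is stated for the order topology of [R]. *)
have ge0_closed : closed [set y : R | 0 <= y] by exact: closed_ge.
apply: closed_bigI => t _.
exact: preimage_closed (fun x _ => @proj_continuous _ _ t x) ge0_closed.
Qed.

Lemma nonneg_sphere_le1 x t : nonneg_sphere x -> x t <= 1.
Proof.
case=> sx x0; rewrite leNgt; apply/negP => xt1.
have : `|x t| `^ alpha <= 1.
  rewrite -sx /powsum (bigD1 t) //= lerDl.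
  by apply: sumr_ge0 => s _; exact: powR_ge0.
have : 1 `^ alpha < x t `^ alpha.
  by apply: gt0_ltr_powR; rewrite // nnegrE // ltW // (lt_trans ltr01 xt1).
by rewrite powR1 ger0_norm // => /lt_le_trans h /h; rewrite ltxx.
Qed.

Lemma compact_nonneg_sphere : compact nonneg_sphere.
Proof.
have cube : compact [set x : 'I_n -> R | forall t, `[(0 : R), 1]%classic (x t)].
  exact: (@tychonoff _ (fun _ : 'I_n => R) _ (fun _ => @segment_compact R 0 1)).
apply: (subclosed_compact closed_nonneg_sphere cube) => x xS t.
by rewrite /= in_itv /= (proj2 xS) nonneg_sphere_le1.
Qed.

Lemma nonneg_sphere_neq0 : (0 < n)%N -> nonneg_sphere !=set0.
Proof.
move=> n_gt0; pose i0 := Ordinal n_gt0.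
exists (fun t => (t == i0)%:R); split=> [|t]; last by case: (t == i0).
rewrite /powsum (bigD1 i0) //= big1 ?eqxx ?normr1 ?powR1 ?addr0 // => t /negbTE ->.
by rewrite normr0 powR0 ?lt0r_neq0.
Qed.

Definition powmean (a b : R) := ((a `^ alpha + b `^ alpha) / 2) `^ alpha^-1.

Lemma powR_powmean a b : powmean a b `^ alpha = (a `^ alpha + b `^ alpha) / 2.
Proof.
by rewrite -powRrM mulVf ?lt0r_neq0 // powRr1 // divr_ge0 // addr_ge0 // powR_ge0.
Qed.

Lemma addr_le_powmean a b : 1 <= alpha -> 0 <= a -> 0 <= b ->
  a + b <= 2 * powmean a b.
Proof.
move=> alpha_ge1 a0 b0; have ab0 : 0 <= (a + b) / 2 by rewrite divr_ge0 // addr_ge0.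
suff : (((a + b) / 2) `^ alpha) `^ alpha^-1 <= powmean a b.
  by rewrite -powRrM mulfV ?lt0r_neq0 // powRr1 //; lra.
apply: ge0_ler_powR; rewrite ?invr_ge0 ?(ltW alpha_gt0) ?nnegrE ?powR_ge0 //.
  by rewrite divr_ge0 // addr_ge0 // powR_ge0.
exact: powR_midpoint_le.
Qed.

Lemma nonneg_sphere_merge x i j : i != j -> nonneg_sphere x ->
  nonneg_sphere (merge x i j (powmean (x i) (x j))).
Proof.
move=> ij [sx x0]; split=> [|t]; last by rewrite /merge; case: ifP; rewrite ?powR_ge0.
apply/eqP; rewrite -sx -subr_eq0 /powsum (sumr_mergeB (fun y => `|y| `^ alpha)) //.
rewrite ger0_norm ?powR_ge0 // powR_powmean !ger0_norm //.
by apply/eqP; rewrite mulr2n; field.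
Qed.

Lemma energy_merge_lt x i j : i != j -> (forall t, 0 <= x t) -> x i != x j ->
  energy (merge x i j (powmean (x i) (x j))) < energy x.
Proof.
move=> ij x0 xij.
rewrite -subr_lt0 /energy (sumr_mergeB (fun y => (`|y| `^ alpha) ^+ 2)) //.
rewrite ger0_norm ?powR_ge0 // powR_powmean !ger0_norm //.
set A := x i `^ alpha; set B := x j `^ alpha.
have AB : A != B.
  apply: contra xij => /eqP AB; apply/eqP.
  by apply: (powR_injective alpha_gt0); rewrite ?nnegrE.
have : 0 < (A - B) ^+ 2 by rewrite exprn_even_gt0 //= subr_eq0.
rewrite mulr2n !expr2 => ?; nra.
Qed.

End power_sum.

Section hypergraph.
Variables (R : realType) (n k : nat) (E : {set {set 'I_n}}).

Lemma continuous_tau : continuous (tau k E : ('I_n -> R) -> R).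
Proof.
have cs : continuous (fun x : 'I_n -> R => \sum_(e in E) \prod_(t in e) x t).
  apply: continuous_big => [|e _]; first exact: add_continuous.
  apply: continuous_big => [|t _]; first exact: mul_continuous.
  exact: proj_continuous.
by move=> x; exact: cvgM (cvg_cst _) (cs x).
Qed.

Lemma tau_le_normr (x : 'I_n -> R) : tau k E x <= tau k E (fun t => `|x t|).
Proof.
rewrite /tau ler_wpM2l // ler_sum // => e _.
by rewrite -normr_prod ler_norm.
Qed.

Lemma sum_prod_aut (s : {perm 'I_n}) (x : 'I_n -> R) : is_aut E s ->
  \sum_(e in E) \prod_(t in e) x t = \sum_(e in E) \prod_(t in e) x (s t).
Proof.
move=> autE; rewrite (reindex_inj (imset_inj (@perm_inj _ s))) /=.
apply: eq_big => [e|e _]; first by rewrite -autE.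
by rewrite big_imset //; move=> ? ? _ _; exact: perm_inj.
Qed.

Lemma prod_add_prod_tperm_le (e : {set 'I_n}) (x : 'I_n -> R) i j m :
  i != j -> (forall t, 0 <= x t) -> x i + x j <= 2 * m ->
  \prod_(t in e) x t + \prod_(t in e) x (tperm i j t)
    <= 2 * \prod_(t in e) merge x i j m t.
Proof.
move=> ij x0 xm; rewrite !(prodr_split2 _ _ ij).
have -> : \prod_(t in e | (t != i) && (t != j)) x (tperm i j t)
        = \prod_(t in e | (t != i) && (t != j)) x t.
  by apply: eq_bigr => t /andP[_ /andP[ti tj]]; rewrite tpermD // eq_sym.
have -> : \prod_(t in e | (t != i) && (t != j)) merge x i j m t
        = \prod_(t in e | (t != i) && (t != j)) x t.
  by apply: eq_bigr => t /andP[_ /andP[ti tj]]; rewrite /merge (negbTE ti) (negbTE tj).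
rewrite tpermL tpermR /merge !eqxx orbT /=.
have P0 : 0 <= \prod_(t in e | (t != i) && (t != j)) x t by apply: prodr_ge0.
have xi := x0 i; have xj := x0 j; have := mulr_le_sqr xi xj xm.
by case: (i \in e); case: (j \in e); rewrite ?mul1r ?mulr1 => ?; nra.
Qed.

Lemma tau_le_merge (x : 'I_n -> R) i j m :
  i != j -> is_aut E (tperm i j) -> (forall t, 0 <= x t) -> x i + x j <= 2 * m ->
  tau k E x <= tau k E (merge x i j m).
Proof.
move=> ij autE x0 xm; rewrite /tau ler_wpM2l // -(@ler_pM2l _ 2) //.
rewrite mulr_natl mulr2n {2}(sum_prod_aut x autE) -big_split mulr_sumr /=.
by apply: ler_sum => e _; exact: prod_add_prod_tperm_le.
Qed.

End hypergraph.

Lemma lambda_eq_max_nonneg_sphere (R : realType) (alpha : R) n k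
    (E : {set {set 'I_n}}) (w : 'I_n -> R) : 0 < alpha ->
  nonneg_sphere alpha w ->
  (forall x, nonneg_sphere alpha x -> tau k E x <= tau k E w) ->
  lambda k alpha E = tau k E w.
Proof.
move=> alpha_gt0 wS wmax.
have ub : ubound [set tau k E x | x in [set x | anorm alpha x = 1]] (tau k E w).
  move=> _ [x /(anorm_eq1 alpha_gt0) sx <-].
  apply: le_trans (tau_le_normr _ _ x) (wmax _ _); split=> [|t]; last exact: normr_ge0.
  by rewrite -sx /powsum; apply: eq_bigr => t _; rewrite normr_id.
have attained : [set tau k E x | x in [set x | anorm alpha x = 1]] (tau k E w).
  by exists w => //; apply/(anorm_eq1 alpha_gt0); case: wS.
apply/le_anti/andP; split; first by apply: ge_sup ub; exists (tau k E w).
by apply: sup_upper_bound => //; split; exists (tau k E w).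
Qed.

Theorem corollary12 (R : realType) (alpha : R) (n k : nat)
    (E : {set {set 'I_n}}) :
  1 <= alpha -> (0 < n)%N -> uniform k E ->
  exists w : 'I_n -> R,
    [/\ anorm alpha w = 1,
        (forall t, 0 <= w t),
        tau k E w = lambda k alpha E
      & forall i j, transp_equiv E i j -> w i = w j].
Proof.
move=> alpha_ge1 n_gt0 _; have alpha_gt0 := lt_le_trans ltr01 alpha_ge1.
have [w [[sw w0] wmax wmin]] := compact_argmax_argmin
  (compact_nonneg_sphere alpha_gt0) (nonneg_sphere_neq0 alpha_gt0 n_gt0)
  (@continuous_tau R n k E) (continuous_energy alpha_gt0).
exists w; split=> //.
- exact/(anorm_eq1 alpha_gt0).
- by rewrite (lambda_eq_max_nonneg_sphere alpha_gt0 (conj sw w0) wmax).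
move=> i j [-> //|autE]; apply/eqP/contraT => wij.
have ij : i != j by apply: contra_neq wij => ->.
pose w' := merge w i j (powmean alpha (w i) (w j)).
have w'S : nonneg_sphere alpha w' by exact: nonneg_sphere_merge.
have w'max : tau k E w' = tau k E w.
  by apply/le_anti; rewrite wmax //= tau_le_merge // addr_le_powmean.
by have := wmin _ w'S w'max; rewrite leNgt energy_merge_lt.
Qed.
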